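(* The linear map $C:\Lambda^\infty\mathbb V\to\Lambda^\infty\mathbb W$ defined by $C(|\lambda\rangle)=|\lambda'_*\rangle$ for every partition $\lambda$ (with conjugate partition $\lambda'$) is an isomorphism of $\mathcal U$-modules.
   Context: $\mathcal U=U_q(\mathfrak{sl}(\infty))$ is the $\mathbb Q(q)$-algebra generated by $E_a,F_a,K_{a,a+1}^{\pm1}$ ($a\in\mathbb Z$), the subalgebra generated by $E_a,F_a,K_{a,a+1}=K_aK_{a+1}^{-1}$ in the standard quantum group $U_q(\mathfrak{gl}(\infty))$ with generators $E_a,F_a,K_a^{\pm1}$. $\Lambda^\infty\mathbb V$ is the $\mathcal U$-module with basis $v_{a_1}\wedge v_{a_2}\wedge\cdots$ ($a_1>a_2>\cdots$ integers, $a_i=1-i$ for $i\gg0$) where, on a basis vector with index set $S=\{a_1,a_2,\dots\}$: $F_a$ replaces the index $a$ by $a+1$ if $a\in S$, $a+1\notin S$, and gives $0$ otherwise; $E_a$ replaces $a+1$ by $a$ if $a+1\in S$, $a\notin S$, and gives $0$ otherwise; $K_{a,a+1}$ acts by $q^{[a\in S]-[a+1\in S]}$. $\Lambda^\infty\mathbb W$ is the $\mathcal U$-module with basis $w_{b_1}\wedge w_{b_2}\wedge\cdots$ ($b_1<b_2<\cdots$, $b_i=i$ for $i\gg0$) where, for index set $S$: $F_a$ replaces $a+1$ by $a$ if $a+1\in S,a\notin S$ (else $0$); $E_a$ replaces $a$ by $a+1$ if $a\in S,a+1\notin S$ (else $0$); $K_{a,a+1}$ acts by $q^{[a+1\in S]-[a\in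 S]}$. (These are the semi-infinite $q$-wedge spaces of the natural module $\mathbb V$ and its dual $\mathbb W$.) For a partition $\lambda=(\lambda_1,\lambda_2,\dots)$ with conjugate $\lambda'$, $|\lambda\rangle=v_{\lambda_1}\wedge v_{\lambda_2-1}\wedge v_{\lambda_3-2}\wedge\cdots$ and $|\lambda'_*\rangle=w_{1-\lambda'_1}\wedge w_{2-\lambda'_2}\wedge w_{3-\lambda'_3}\wedge\cdots$. *)

From HB Require Import structures.
From mathcomp Require Import all_boot all_order all_algebra.
From mathcomp Require Import fraction finmap.
From mathcomp.multinomials Require Import monalg.
From Stdlib Require Import ClassicalEpsilon.

Set Implicit Arguments.
Unset Strict Implicit.
Unset Printing Implicit Defensive.

Import Order.TTheory GRing.Theory Num.Theory.
Local Open Scope ring_scope.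

Definition is_partition (s : seq nat) : bool :=
  sorted geq s && all (fun x => (0 < x)%N) s.

Record ptn := Partition { pval :> seq nat; pvalP : is_partition pval }.
HB.instance Definition _ := [isSub for pval].
HB.instance Definition _ := [Choice of ptn by <:].

(* lambda_i for i >= 1 (parts beyond the length are 0) *)
Definition part (l : ptn) (i : nat) : nat := nth 0%N (pval l) i.-1.

Definition conj_seq (s : seq nat) : seq nat :=
  [seq count (fun x => j <= x)%N s | j <- iota 1 (foldr maxn 0%N s)].

Lemma conj_seq_partition (s : seq nat) : is_partition (conj_seq s).
Proof.
apply/andP; split.
  apply: (@homo_sorted _ _ _ ltn) ; last exact: iota_ltn_sorted.
  move=> x y /ltnW lexy /=.
  by apply: sub_count => z /= /(leq_trans lexy).
apply/allP => c /mapP [j]; rewrite mem_iota => /andP [j1 jm] ->.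
rewrite -has_count; rewrite add1n ltnS in jm.
elim: s jm => [|x s IH] /=; first by rewrite leqn0 => /eqP j0; rewrite j0 in j1.
by rewrite leq_max => /orP [->//|/IH ->]; rewrite orbT.
Qed.

Definition conj_part (l : ptn) : ptn :=
  Partition (conj_seq_partition (pval l)).

Definition Qq := {fraction {poly rat}}.
Definition q : Qq := @FracField.tofrac {poly rat} 'X.

Definition LV := {malg Qq[ptn]}.
Definition LW := {malg Qq[ptn]}.
HB.instance Definition _ := GRing.Lmodule.copy LV {malg Qq[ptn]}.
HB.instance Definition _ := GRing.Lmodule.copy LW {malg Qq[ptn]}.

Definition lext (M : lmodType Qq) (h : ptn -> M)
  (v : {malg Qq[ptn]}) : M :=
  \sum_(k <- msupp v) v@_k *: h k.

(* The basis vector v_{a_1} /\ v_{a_2} /\ ... of Lambda^infty V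
   (a_1 > a_2 > ..., a_i = 1 - i for i >> 0) is |lambda> with
   a_i = lambda_i - i + 1; the basis vector w_{b_1} /\ w_{b_2} /\ ... of
   Lambda^infty W (b_1 < b_2 < ..., b_i = i for i >> 0) is |mu_*> with
   b_i = i - mu_i.  These are bijections onto the sets of basis indices. *)
Definition memV (l : ptn) (a : int) : Prop :=
  exists i : nat, (0 < i)%N /\ a = (part l i)%:Z - i%:Z + 1.
Definition memW (m : ptn) (b : int) : Prop :=
  exists i : nat, (0 < i)%N /\ b = i%:Z - (part m i)%:Z.

Definition ketV (l : ptn) : LV := << l >>.
Definition ketW (m : ptn) : LW := << m >>.

Definition pif (T : Type) (P : Prop) (x y : T) : T :=
  if excluded_middle_informative P then x else y.
Definition ind (P : Prop) : int := pif P 1 0.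

(* the basis vector whose index set is T (0 if T is not an index set;
   this never happens in the uses below) *)
Definition pick_part (P : ptn -> Prop) : option ptn :=
  match excluded_middle_informative (exists m, P m) with
  | left H => Some (proj1_sig (constructive_indefinite_description _ H))
  | right _ => None
  end.
Definition vecV (T : int -> Prop) : LV :=
  match pick_part (fun m => forall x, memV m x <-> T x) with
  | Some m => ketV m | None => 0 end.
Definition vecW (T : int -> Prop) : LW :=
  match pick_part (fun m => forall x, memW m x <-> T x) with
  | Some m => ketW m | None => 0 end.

(* Generators of U = U_q(sl(infty)) : E_a, F_a, K_{a,a+1}, K_{a,a+1}^{-1} *)
Inductive gen := GE of int | GF of int | GK of int | GKinv of int.

Definition actV_basis (g : gen) (l : ptn) : LV :=
  match g with
  | GF a => pif (memV l a /\ ~ memV l (a + 1))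
              (vecV (fun x => (memV l x /\ x <> a) \/ x = a + 1)) 0
  | GE a => pif (memV l (a + 1) /\ ~ memV l a)
              (vecV (fun x => (memV l x /\ x <> a + 1) \/ x = a)) 0
  | GK a => (q ^ (ind (memV l a) - ind (memV l (a + 1)))) *: ketV l
  | GKinv a => (q ^ (- (ind (memV l a) - ind (memV l (a + 1))))) *: ketV l
  end.

Definition actW_basis (g : gen) (m : ptn) : LW :=
  match g with
  | GF a => pif (memW m (a + 1) /\ ~ memW m a)
              (vecW (fun x => (memW m x /\ x <> a + 1) \/ x = a)) 0
  | GE a => pif (memW m a /\ ~ memW m (a + 1))
              (vecW (fun x => (memW m x /\ x <> a) \/ x = a + 1)) 0
  | GK a => (q ^ (ind (memW m (a + 1)) - ind (memW m a))) *: ketW m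
  | GKinv a => (q ^ (- (ind (memW m (a + 1)) - ind (memW m a)))) *: ketW m
  end.

Definition actV (g : gen) (v : LV) : LV := lext (actV_basis g) v.
Definition actW (g : gen) (w : LW) : LW := lext (actW_basis g) w.

Definition Cmap (v : LV) : LW := lext (fun l => ketW (conj_part l)) v.

(* Write S(l) = {l_i - i + 1} for the index set of |l> and S_*(m) = {i - m_i} for
   that of |m_*>.  The duality  j <= l_i  <->  i <= l'_j  between a partition and
   its conjugate shows that S_*(l') is the complement of S(l) in Z (the two
   halves of the Maya diagram of l).  Hence C maps the basis vector with index
   set S to the one with index set Z \ S, and the two actions correspond under
   complementation: moving a to a+1 in S is moving a+1 to a in Z \ S, and
   [a in S] - [a+1 in S] = [a+1 notin S] - [a notin S].  C is invertible because
   conjugation is an involution. *)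

From HB Require Import structures.
From mathcomp Require Import all_boot all_order all_algebra.
From mathcomp.multinomials Require Import monalg.
From mathcomp Require Import finmap zify.
From Stdlib Require Import Classical ClassicalEpsilon.

Set Implicit Arguments.
Unset Strict Implicit.
Unset Printing Implicit Defensive.

Import Order.TTheory GRing.Theory Num.Theory.

Local Open Scope ring_scope.

Section LinearExtension.
Variables (M : lmodType Qq) (h : ptn -> M).

Lemma lextE (d : {fset ptn}) (v : {malg Qq[ptn]}) : (msupp v `<=` d)%fset ->
  lext h v = \sum_(k <- d) v@_k *: h k.
Proof.
move=> le_vd; rewrite /lext [LHS](big_fset_incl _ le_vd) //= => k _.
by move/mcoeff_outdom ->; rewrite scale0r.
Qed.

Lemma lextU (l : ptn) : lext h << l >> = h l.
Proof. by rewrite (lextE msuppU_le) big_seq_fset1 mcoeffUU scale1r. Qed.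

Lemma lext_is_linear : linear (lext h).
Proof.
move=> a u v; pose d := (msupp u `|` msupp v)%fset.
have le_ud : (msupp u `<=` d)%fset by apply: fsubsetUl.
have le_vd : (msupp v `<=` d)%fset by apply: fsubsetUr.
have le_uvd : (msupp (a *: u + v) `<=` d)%fset.
  apply: fsubset_trans (msuppD_le _ _) _; apply/fsetUSS => //.
  exact: fsubset_trans (msuppZ_le _ _) _.
rewrite (lextE le_uvd) (lextE le_ud) (lextE le_vd) scaler_sumr -big_split /=.
by apply: eq_bigr => k _; rewrite mcoeffD mcoeffZ scalerDl scalerA.
Qed.

HB.instance Definition _ :=
  GRing.isLinear.Build Qq {malg Qq[ptn]} M *:%R (lext h) lext_is_linear.

Lemma eq_lext (h' : ptn -> M) : h =1 h' -> lext h =1 lext h'.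
Proof. by move=> eq_h v; apply: eq_bigr => k _; rewrite eq_h. Qed.

Lemma lext_comp (N : lmodType Qq) (f : {linear M -> N}) v :
  f (lext h v) = lext (f \o h) v.
Proof. by rewrite linear_sum; apply: eq_bigr => k _; rewrite linearZ. Qed.

End LinearExtension.

Lemma lext_id : lext (fun k => << k >>) =1 id.
Proof.
move=> v; rewrite [RHS]monalgE; apply: eq_bigr => k _.
by apply/malgP => k'; rewrite mcoeffZ !mcoeffU mulr_natr.
Qed.

Lemma lext_basis_cancel (s t : ptn -> ptn) : cancel s t ->
  cancel (lext (fun k => << s k >> : {malg Qq[ptn]}))
         (lext (fun k => << t k >> : {malg Qq[ptn]})).
Proof.
move=> st v; rewrite lext_comp -[RHS]lext_id.
by apply: eq_lext => k /=; rewrite lextU st.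
Qed.

Local Close Scope ring_scope.

Lemma leq_nth_count (s : seq nat) i j : sorted geq s -> 0 < j ->
  (j <= nth 0 s i) = (i < count (leq j) s).
Proof.
elim: s i => [|y s IH] i /= sorted_ys j_gt0; first by rewrite nth_nil leqNgt j_gt0.
have ge_y : all (geq y) s.
  by apply: order_path_min sorted_ys => b a c le_ba le_cb; exact: leq_trans le_cb le_ba.
have [le_jy | lt_yj] := leqP j y.
  by case: i => [|i] /=; rewrite ?le_jy // add1n ltnS IH // (path_sorted sorted_ys).
have ->: count (leq j) s = 0.
  apply/eqP; rewrite -leqn0 leqNgt -has_count; apply/hasPn => x /(allP ge_y) le_xy.
  by rewrite -ltnNge (leq_ltn_trans le_xy lt_yj).
have nle_jy : (j <= y) = false by rewrite leqNgt lt_yj.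
case: i => [|i] /=; rewrite ?nle_jy // add0n ltn0; apply/negbTE; rewrite -ltnNge.
have le_nth_y : nth 0 s i <= y.
  have [lt_is | ] := ltnP i (size s); last by move=> /(nth_default 0) ->.
  exact: (allP ge_y) _ (mem_nth 0 lt_is).
exact: leq_ltn_trans le_nth_y lt_yj.
Qed.

Lemma part_conj_part (l : ptn) j : 0 < j -> part (conj_part l) j = count (leq j) l.
Proof.
move=> j_gt0; rewrite /part /= /conj_seq.
have [lt_jm | le_mj] := ltnP j.-1 (foldr maxn 0 l).
  by rewrite (nth_map 0) ?size_iota // nth_iota // add1n prednK.
rewrite nth_default ?size_map ?size_iota //; apply/esym/eqP.
rewrite -leqn0 leqNgt -has_count; apply/hasPn => x l_x; rewrite -ltnNge.
apply: leq_ltn_trans (_ : x <= foldr maxn 0 l) _; last by rewrite -(prednK j_gt0).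
by elim: (pval l) l_x => //= y s IH; rewrite in_cons leq_max => /orP[/eqP->|/IH->];
  rewrite ?leqnn ?orbT.
Qed.

Lemma leq_part_conj (l : ptn) i j : 0 < i -> 0 < j ->
  (j <= part l i) = (i <= part (conj_part l) j).
Proof.
move=> i_gt0 j_gt0; rewrite part_conj_part // /part leq_nth_count ?prednK //.
by case/andP: (pvalP l).
Qed.

Lemma part_gt0 (l : ptn) i : 0 < i -> i <= size l -> 0 < part l i.
Proof.
move=> i_gt0 le_il; case/andP: (pvalP l) => _ /allP; apply; apply: mem_nth.
by rewrite prednK.
Qed.

Lemma eq_from_part (l l' : ptn) : (forall i, 0 < i -> part l i = part l' i) -> l = l'.
Proof.
move=> eq_part; apply: val_inj => /=.
have eq_nth i : nth 0 l i = nth 0 l' i by exact: (eq_part i.+1).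
have eq_size : size l = size l'.
  apply/eqP; rewrite eqn_leq; apply/andP; split; rewrite leqNgt; apply/negP => lt_size.
    by have := part_gt0 (ltn0Sn _) lt_size; rewrite /part /= eq_nth nth_default.
  by have := part_gt0 (ltn0Sn _) lt_size; rewrite /part /= -eq_nth nth_default.
by apply: (eq_from_nth (x0 := 0)) => // i _; exact: eq_nth.
Qed.

Lemma conj_partK : involutive conj_part.
Proof.
move=> l; apply: eq_from_part => i i_gt0.
have leq_conjK j : 0 < j -> (j <= part (conj_part (conj_part l)) i) = (j <= part l i).
  by move=> j_gt0; rewrite -leq_part_conj // [RHS]leq_part_conj.
apply/eqP; rewrite eqn_leq; apply/andP; split.
  have [-> // | lhs_gt0] := posnP (part (conj_part (conj_part l)) i).
  by rewrite -leq_conjK.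
have [-> // | rhs_gt0] := posnP (part l i).
by rewrite leq_conjK.
Qed.

Lemma part_nonincr (l : ptn) i k : 0 < i -> i <= k -> part l k <= part l i.
Proof.
move=> i_gt0 le_ik; case E: (part l k) => [//|j].
have k_gt0 : 0 < k by exact: leq_trans le_ik.
have := leq_part_conj l k_gt0 (ltn0Sn j); rewrite E leqnn => /esym le_k.
by rewrite leq_part_conj // (leq_trans le_ik le_k).
Qed.

Local Open Scope ring_scope.

Lemma memW_conj_part_notV (l : ptn) x : memW (conj_part l) x -> ~ memV l x.
Proof.
move=> [j [j_gt0 ->]] [i [i_gt0 eq_x]].
by have := leq_part_conj l i_gt0 j_gt0; case: leqP => /esym ?; lia.
Qed.

Lemma notV_memW_conj_part (l : ptn) x : ~ memV l x -> memW (conj_part l) x.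
Proof.
move=> notV_x.
have ex_i : exists i, (0 < i)%N && ((part l i)%:Z - i%:Z + 1 <= x).
  exists (size l + `|x| + 1)%N; rewrite /part nth_default; last by lia.
  by apply/andP; split; lia.
(* i is the first index with l_i - i + 1 <= x; then x = j - l'_j for j = x + i - 1. *)
case: (ex_minnP ex_i) => i /andP [i_gt0 le_ix] min_i.
have lt_ix : (part l i)%:Z - i%:Z + 1 < x.
  by rewrite lt_neqAle le_ix andbT; apply/eqP => eq_x; apply: notV_x; exists i.
have lt_x_pred : (1 < i)%N -> x < (part l i.-1)%:Z - (i.-1)%:Z + 1.
  move=> i_gt1; rewrite ltNge; apply/negP => le_x.
  by have := min_i i.-1; rewrite le_x andbT; lia.
pose j := absz (x + i%:Z - 1)%R.
have eq_j : j%:Z = x + i%:Z - 1 by rewrite /j; lia.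
have j_gt0 : (0 < j)%N by lia.
have lt_conj : (part (conj_part l) j < i)%N by rewrite ltnNge -leq_part_conj //; lia.
have le_conj : (i.-1 <= part (conj_part l) j)%N.
  have [i_gt1 | ] := ltnP 1 i; last by lia.
  by rewrite -leq_part_conj; [have := lt_x_pred i_gt1; lia | lia | done].
by exists j; split => //; lia.
Qed.

Lemma memW_conj_part (l : ptn) x : memW (conj_part l) x <-> ~ memV l x.
Proof. by split; [apply: memW_conj_part_notV | apply: notV_memW_conj_part]. Qed.

Lemma memW_conjV (m : ptn) x : memW m x <-> ~ memV (conj_part m) x.
Proof. by rewrite -{1}(conj_partK m) memW_conj_part. Qed.

Lemma part_le_of_memV_sub (l l' : ptn) i :
  (forall x, memV l x -> memV l' x) ->
  (forall k, (0 < k < i)%N -> part l k = part l' k) -> (0 < i)%N ->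
  (part l i <= part l' i)%N.
Proof.
move=> sub_ll' eq_below i_gt0.
have [k [k_gt0 eq_k]] : memV l' ((part l i)%:Z - i%:Z + 1) by apply: sub_ll'; exists i.
have [lt_ki | le_ik] := ltnP k i.
  have eq_part_k : part l k = part l' k by apply: eq_below; rewrite k_gt0 lt_ki.
  by have := part_nonincr l k_gt0 (ltnW lt_ki); lia.
have := part_nonincr l' i_gt0 le_ik; lia.
Qed.

Lemma memV_inj (l l' : ptn) : (forall x, memV l x <-> memV l' x) -> l = l'.
Proof.
move=> eq_memV; apply: eq_from_part => i; elim/ltn_ind: i => i IH i_gt0.
have eq_below k : (0 < k < i)%N -> part l k = part l' k.
  by case/andP=> k_gt0 lt_ki; exact: IH.
apply/eqP; rewrite eqn_leq.
rewrite (part_le_of_memV_sub (fun x => proj1 (eq_memV x))) //=.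
by apply: part_le_of_memV_sub => // [x /eq_memV | k /eq_below ->].
Qed.

Lemma memW_inj (m m' : ptn) : (forall x, memW m x <-> memW m' x) -> m = m'.
Proof.
move=> eq_memW; apply: (can_inj conj_partK); apply: memV_inj => x.
by have := eq_memW x; rewrite !memW_conjV; case: (classic (memV (conj_part m) x)); tauto.
Qed.

HB.instance Definition _ :=
  GRing.isLinear.Build Qq LV LW *:%R Cmap (lext_is_linear _).

Lemma CmapU (l : ptn) : Cmap (ketV l) = ketW (conj_part l).
Proof. exact: lextU. Qed.

Lemma pick_partE (P : ptn -> Prop) m :
  (forall m', P m' -> m' = m) -> P m -> pick_part P = Some m.
Proof.
move=> uniq_P Pm; rewrite /pick_part.
case: excluded_middle_informative => [ex_P | []]; last by exists m.
by case: constructive_indefinite_description => m' /= /uniq_P ->.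
Qed.

Lemma pick_part_None (P : ptn -> Prop) : ~ (exists m, P m) -> pick_part P = None.
Proof. by rewrite /pick_part; case: excluded_middle_informative. Qed.

Lemma vecVE (T : int -> Prop) l : (forall x, memV l x <-> T x) -> vecV T = ketV l.
Proof.
move=> eq_l; rewrite /vecV (pick_partE (m := l)) // => l' eq_l'.
by apply: memV_inj => x; rewrite eq_l eq_l'.
Qed.

Lemma vecWE (T : int -> Prop) m : (forall x, memW m x <-> T x) -> vecW T = ketW m.
Proof.
move=> eq_m; rewrite /vecW (pick_partE (m := m)) // => m' eq_m'.
by apply: memW_inj => x; rewrite eq_m eq_m'.
Qed.

Lemma Cmap_vecV (T T' : int -> Prop) : (forall x, T' x <-> ~ T x) ->
  Cmap (vecV T) = vecW T'.
Proof.
move=> compl_T.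
have [[l eq_l] | no_l] := classic (exists l, forall x, memV l x <-> T x).
  rewrite (vecVE eq_l) (@vecWE _ (conj_part l)) ?CmapU // => x.
  by rewrite memW_conj_part compl_T eq_l.
rewrite /vecV /vecW !pick_part_None ?linear0 // => -[m eq_m]; apply: no_l.
exists (conj_part m) => x; have := eq_m x; rewrite compl_T memW_conjV.
by case: (classic (T x)); case: (classic (memV (conj_part m) x)); tauto.
Qed.

Lemma pif_map (T U : Type) (f : T -> U) (P : Prop) x y :
  f (pif P x y) = pif P (f x) (f y).
Proof. by rewrite /pif; case: excluded_middle_informative. Qed.

Lemma eq_pif (T : Type) (P Q : Prop) (x x' y y' : T) :
  (P <-> Q) -> x = x' -> y = y' -> pif P x y = pif Q x' y'.
Proof.
move=> eqPQ -> ->; rewrite /pif.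
by case: excluded_middle_informative => p; case: excluded_middle_informative => q //;
  exfalso; tauto.
Qed.

Lemma not_replace (T : Type) (S : T -> Prop) b c x : b <> c ->
  ~ ((S x /\ x <> b) \/ x = c) <-> ((~ S x /\ x <> c) \/ x = b).
Proof.
move=> neq_bc; have neq_cb := not_eq_sym neq_bc.
case: (classic (x = b)) => [-> | neq_xb]; first by have := erefl b; tauto.
by case: (classic (x = c)) => [-> | neq_xc]; [have := erefl c | ]; tauto.
Qed.

Lemma ind_memW_conj_part (l : ptn) x : ind (memW (conj_part l) x) = 1 - ind (memV l x).
Proof.
rewrite /ind (@eq_pif _ _ (~ memV l x) 1 1 0 0) ?memW_conj_part // /pif.
by do 2 case: excluded_middle_informative.
Qed.

Lemma Cmap_actV_basis g l : Cmap (actV_basis g l) = actW_basis g (conj_part l).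
Proof.
have W_V := memW_conj_part l.
case: g => a /=.
- rewrite (pif_map Cmap); apply: eq_pif; last exact: linear0.
    by rewrite !W_V; have := classic (memV l a); tauto.
  apply: Cmap_vecV => x; rewrite W_V; apply: iff_sym; apply: not_replace; lia.
- rewrite (pif_map Cmap); apply: eq_pif; last exact: linear0.
    by rewrite !W_V; have := classic (memV l (a + 1)); tauto.
  apply: Cmap_vecV => x; rewrite W_V; apply: iff_sym; apply: not_replace; lia.
- by rewrite linearZ /= CmapU !ind_memW_conj_part; congr (q ^ _ *: _); lia.
- by rewrite linearZ /= CmapU !ind_memW_conj_part; congr (q ^ _ *: _); lia.
Qed.

Theorem theorem6p3 :
  (forall l : ptn, Cmap (ketV l) = ketW (conj_part l)) /\
  linear Cmap /\
  bijective Cmap /\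
  (forall (g : gen) (v : LV), Cmap (actV g v) = actW g (Cmap v)).
Proof.
split; first exact: CmapU.
split; first exact: lext_is_linear.
split.
  by exists (lext (fun m => ketV (conj_part m))); apply: lext_basis_cancel conj_partK.
move=> g v; rewrite /actV lext_comp /actW [in RHS]/Cmap lext_comp.
by apply: eq_lext => l /=; rewrite Cmap_actV_basis lextU.
Qed.
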